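(* Let $f:\mathbb{R}^n\to(-\infty,+\infty]$ be proper, lower semicontinuous and prox-bounded with threshold $\lambda_f>0$, let $0<\lambda<\lambda_f$ and let $x_0\in\operatorname{dom}\partial_p^\lambda f$. Define $\widehat f:\mathbb{R}^n\to(-\infty,+\infty]$ by $$\widehat f(x):=f(x_0)+\lambda^{-1}j(x_0)+\sup\Big\{\sum_{i=0}^{k-1}\langle x_i^*+\lambda^{-1}x_i,x_{i+1}-x_i\rangle+\langle x_k^*+\lambda^{-1}x_k,x-x_k\rangle\Big\}-\lambda^{-1}j(x),$$ where the supremum is over all $k\in\mathbb N$, all $x_1,\dots,x_k\in\operatorname{dom}\partial_p^\lambda f$ and all $x_i^*\in\partial_p^\lambda f(x_i)$, $i=0,\dots,k$. Then: (i) $\widehat f=h_\lambda f$ and $e_\lambda\widehat f=e_\lambda f$; (ii) if in addition $f+\lambda^{-1}j$ is convex, then $\widehat f=f$.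
   Context: $j:=\frac12\|\cdot\|^2$. $e_\lambda f(x):=\inf_y\{f(y)+\frac1{2\lambda}\|y-x\|^2\}$; prox-bounded with threshold $\lambda_f=\sup\{\lambda>0:e_\lambda f(x)>-\infty\text{ for some }x\}$. $v\in\partial_p^\lambda f(x)$ iff $x\in\operatorname{dom}f$ and $f(y)\ge f(x)+\langle v,y-x\rangle-\frac1{2\lambda}\|y-x\|^2$ for all $y$. $h_\lambda f:=-e_\lambda(-e_\lambda f)$ is the $\lambda$-proximal hull. *)

From HB Require Import structures.
From mathcomp Require Import all_boot all_order all_algebra.
From mathcomp Require Import all_classical all_reals ereal.
Set Implicit Arguments. Unset Strict Implicit. Unset Printing Implicit Defensive.
Import Order.TTheory GRing.Theory Num.Theory.
Local Open Scope ring_scope.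
Local Open Scope classical_set_scope.

Section Defs.
Variables (R : realType) (n : nat).
Notation V := 'rV[R]_n.

Definition dotv (u v : V) : R := \sum_(i < n) u ord0 i * v ord0 i.

Definition jfun (x : V) : R := dotv x x / 2.

Definition proper_fun (f : V -> \bar R) : Prop :=
  (forall x, f x != -oo%E) /\ (exists x, f x != +oo%E).

Definition domf (f : V -> \bar R) : set V := [set x | f x < +oo]%E.

(* lower semicontinuity w.r.t. the Euclidean topology
   (ball expressed via j(y - x) = ||y-x||^2/2 < d) *)
Definition lsc (f : V -> \bar R) : Prop :=
  forall x (a : R), (a%:E < f x)%E ->
    exists2 d : R, 0 < d & forall y, jfun (y - x) < d -> (a%:E < f y)%E.

Definition moreau (lam : R) (f : V -> \bar R) (x : V) : \bar R :=
  ereal_inf [set (f y + (jfun (y - x) / lam)%:E)%E | y in [set: V]].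

Definition prox_bounded (f : V -> \bar R) : Prop :=
  exists2 lam : R, 0 < lam & exists x, (-oo < moreau lam f x)%E.

Definition prox_threshold (f : V -> \bar R) : \bar R :=
  ereal_sup [set lam%:E | lam in [set lam : R | 0 < lam /\
                                  exists x, (-oo < moreau lam f x)%E]].

Definition prox_subdiff (lam : R) (f : V -> \bar R) (x v : V) : Prop :=
  x \in domf f /\
  forall y, (f x + (dotv v (y - x) - jfun (y - x) / lam)%:E <= f y)%E.

Definition dom_prox_subdiff (lam : R) (f : V -> \bar R) : set V :=
  [set x | exists v, prox_subdiff lam f x v].

Definition prox_hull (lam : R) (f : V -> \bar R) (x : V) : \bar R :=
  (- moreau lam (fun y => - moreau lam f y) x)%E.

Definition chain_sums (lam : R) (f : V -> \bar R) (x0 x : V) : set (\bar R) :=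
  [set s | exists (k : nat) (xs vs : nat -> V),
     [/\ xs 0%N = x0,
         (forall i, (i <= k)%N -> prox_subdiff lam f (xs i) (vs i)) &
         s = ((\sum_(i < k) dotv (vs i + lam^-1 *: xs i) (xs i.+1 - xs i))
              + dotv (vs k + lam^-1 *: xs k) (x - xs k))%:E]].

Definition fhat (lam : R) (f : V -> \bar R) (x0 x : V) : \bar R :=
  (f x0 + (jfun x0 / lam)%:E + ereal_sup (chain_sums lam f x0 x)
   - (jfun x / lam)%:E)%E.

Definition convex_fun (g : V -> \bar R) : Prop :=
  forall (x y : V) (t : R), 0 < t < 1 ->
    (g (((1 - t) *: x + t *: y)%R) <= (1 - t)%:E * g x + t%:E * g y)%E.

End Defs.

From HB Require Import structures.
From mathcomp Require Import all_boot all_order all_algebra.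
From mathcomp Require Import all_classical all_reals ereal.
From mathcomp Require Import topology normedtype matrix_normedtype.
From mathcomp Require Import ring lra.
Import Order.TTheory GRing.Theory Num.Theory numFieldTopology.Exports numFieldNormedType.Exports.
Set Implicit Arguments. Unset Strict Implicit. Unset Printing Implicit Defensive.
Local Open Scope ring_scope.
Local Open Scope classical_set_scope.

(* Write g := f + j/lam (this is [fj lam f]).  A vector v is a lam-proximal
   subgradient of f at x exactly when v + x/lam is a subgradient of g at x, i.e.
   the slope of an affine minorant of g touching g at x.  Summing subgradient
   inequalities along a chain shows that every chain in the supremum defining
   fhat gives an affine minorant of g, and an affine minorant a + <u, .> of g
   yields a + <u, x> - j(x)/lam <= e_lam f (lam u) - j(lam u - x)/lam
   <= h_lam f x; hence fhat <= h_lam f.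
   Conversely h_lam f x = sup_z [e_lam f z - j(z - x)/lam].  As lam is below the
   prox-threshold and f is lsc, f + j(. - w)/lam attains its minimum at some
   proximal point P w, and w/lam is a subgradient of g at P w.  Walking from
   x0 + lam v0 to z in N equal steps, the proximal points form a chain whose sum
   is e_lam f z - j(z - x)/lam up to O(1/N).  Then e_lam fhat = e_lam h_lam f
   = e_lam f.
   If g is convex and a < f x, the proximal point p of g + j(. - x)/t (t small)
   carries the subgradient (x - p)/t of g, whose affine minorant exceeds
   a + j(x)/lam at x; so h_lam f = f. *)

Lemma exists_natSinv_lt (R : realType) (e : R) : 0 < e -> exists N : nat, N.+1%:R^-1 < e.
Proof.
move=> e0; exists (Num.truncn e^-1).
rewrite -[X in _ < X](invrK e) ltf_pV2 ?posrE ?invr_gt0 ?ltr0n //.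
exact: truncnS_gt.
Qed.

Lemma le0_of_le_scaled (R : realType) (a b : R) : 0 <= b ->
  (forall s, 0 < s < 1 -> a <= s * b) -> a <= 0.
Proof.
move=> b0 H; rewrite leNgt; apply/negP => a0.
have d0 : 0 < 2 * (a + b) by lra.
set s := a / (2 * (a + b)).
have s0 : 0 < s by rewrite divr_gt0.
have s1 : s <= 2^-1 by rewrite ler_pdivrMr //; lra.
have := H s; rewrite s0 (le_lt_trans s1) ?invf_lt1 ?ltr1n // => /(_ isT).
have : s * b <= s * (a + b) by rewrite ler_pM2l //; lra.
have -> : s * (a + b) = a / 2 by rewrite /s; field; rewrite gt_eqF //; lra.
lra.
Qed.

Lemma lte_EFin_between (R : realType) (x : R) (y : \bar R) : (x%:E < y)%E ->
  exists2 a, x < a & (a%:E < y)%E.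
Proof.
case: y => [t||] h.
- by exists ((x + t) / 2); move: h; rewrite !lte_fin => h; lra.
- by exists (x + 1); [lra | rewrite ltry].
- by move: h; rewrite ltNge leNye.
Qed.

Lemma lee_EFin_approx (R : realType) (y F : \bar R) :
  (forall a : R, (a%:E < y)%E -> (a%:E <= F)%E) -> (y <= F)%E.
Proof.
case: F => [r| |] H; last 2 first.
- by rewrite leey.
- case: y H => [t| |] H //.
  + by have := H (t - 1); rewrite lte_fin ltrBlDr ltrDl ltr01 => /(_ isT).
  + by have := H 0; rewrite ltry => /(_ isT).
rewrite leNgt; apply/negP => /lte_EFin_between[a ra ay].
by have := H a ay; rewrite lee_fin; lra.
Qed.

Lemma lee_EFin_addr (R : realType) (a b : R) (e : \bar R) : e != -oo%E ->
  (forall r, e = r%:E -> a <= r + b) -> (a%:E <= e + b%:E)%E.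
Proof.
case: e => [r| |] eNy h; last by rewrite eqxx in eNy.
  by rewrite -EFinD lee_fin h.
by rewrite addye ?leey.
Qed.

Lemma le_EFin_natSinv (R : realType) (A C : R) (F : \bar R) :
  (forall N : nat, ((A - C / N.+1%:R)%:E <= F)%E) -> (A%:E <= F)%E.
Proof.
move=> H; apply/lee_subgt0Pr => e e0.
have K0 : 0 < `|C| + 1 by rewrite ltr_wpDl.
have [N] := exists_natSinv_lt (divr_gt0 e0 K0); rewrite ltr_pdivlMr // => hN.
apply: le_trans (H N); rewrite lee_fin lerD2l lerN2.
apply: le_trans (ltW hN); rewrite [X in _ <= X]mulrC ler_wpM2r ?invr_ge0 ?ler0n //.
by have := ler_norm C; lra.
Qed.

Section Euclid.
Variables (R : realType) (n : nat).
Local Notation V := 'rV[R]_n.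
Implicit Types (u v w : V).

Lemma dotvC u v : dotv u v = dotv v u.
Proof. by apply: eq_bigr => i _; rewrite mulrC. Qed.

Lemma dotvDl u v w : dotv (u + v) w = dotv u w + dotv v w.
Proof. by rewrite /dotv -big_split; apply: eq_bigr => i _; rewrite !mxE mulrDl. Qed.

Lemma dotvZl (a : R) u v : dotv (a *: u) v = a * dotv u v.
Proof. by rewrite /dotv mulr_sumr; apply: eq_bigr => i _; rewrite !mxE mulrA. Qed.

Lemma dotvNl u v : dotv (- u) v = - dotv u v.
Proof. by rewrite -scaleN1r dotvZl mulN1r. Qed.

Lemma dotvBl u v w : dotv (u - v) w = dotv u w - dotv v w.
Proof. by rewrite dotvDl dotvNl. Qed.

Lemma dotvDr u v w : dotv w (u + v) = dotv w u + dotv w v.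
Proof. by rewrite dotvC dotvDl !(dotvC w). Qed.

Lemma dotvZr (a : R) u v : dotv v (a *: u) = a * dotv v u.
Proof. by rewrite dotvC dotvZl dotvC. Qed.

Lemma dotvBr u v w : dotv w (u - v) = dotv w u - dotv w v.
Proof. by rewrite !(dotvC w) dotvBl. Qed.

Lemma dotvNr u v : dotv v (- u) = - dotv v u.
Proof. by rewrite dotvC dotvNl dotvC. Qed.

Definition dotvE := (dotvDl, dotvDr, dotvBl, dotvBr, dotvZl, dotvZr, dotvNl, dotvNr).

Lemma dotvv_ge0 u : 0 <= dotv u u.
Proof. by apply: sumr_ge0 => i _; rewrite -expr2 sqr_ge0. Qed.

Lemma jfun_ge0 u : 0 <= jfun u.
Proof. by rewrite divr_ge0 ?dotvv_ge0. Qed.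

Lemma dotvv u : dotv u u = 2 * jfun u.
Proof. by rewrite /jfun; field. Qed.

Lemma jfunD u v : jfun (u + v) = jfun u + dotv u v + jfun v.
Proof. by rewrite /jfun !dotvE (dotvC v u); field. Qed.

Lemma jfunB u v : jfun (u - v) = jfun u - dotv u v + jfun v.
Proof. by rewrite /jfun !dotvE (dotvC v u); field. Qed.

Lemma jfunZ (a : R) u : jfun (a *: u) = a ^+ 2 * jfun u.
Proof. by rewrite /jfun !dotvE; field. Qed.

Lemma jfunBC u v : jfun (u - v) = jfun (v - u).
Proof. by rewrite !jfunB dotvC; lra. Qed.

Lemma dotv_le_jfun (s : R) u v : 0 < s -> dotv u v <= s * jfun u + jfun v / s.
Proof.
move=> s0; have := jfun_ge0 (s *: u - v); rewrite jfunB jfunZ dotvZl => h.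
rewrite -subr_ge0 (_ : _ - _ = (s ^+ 2 * jfun u - s * dotv u v + jfun v) / s).
  by rewrite divr_ge0 // ltW.
by field; rewrite gt_eqF.
Qed.

Lemma jfunD_le (s : R) u v : 0 < s ->
  jfun (u + v) <= (1 + s) * jfun u + (1 + s^-1) * jfun v.
Proof. by move=> s0; rewrite jfunD; have := dotv_le_jfun u v s0; lra. Qed.

Lemma jfun_segment (s : R) u v w :
  jfun ((1 - s) *: u + s *: v - w) =
  jfun (u - w) + s * dotv (u - w) (v - u) + s ^+ 2 * jfun (v - u).
Proof.
have -> : (1 - s) *: u + s *: v - w = (u - w) + s *: (v - u).
  by apply/rowP => i; rewrite !mxE; ring.
by rewrite jfunD jfunZ dotvZr.
Qed.

Lemma coord_le_jfun u i : `|u ord0 i| <= 1 + 2 * jfun u.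
Proof.
rewrite -dotvv /dotv (bigD1 i) //= addrA.
apply: le_trans (_ : 1 + u ord0 i * u ord0 i <= _).
  by rewrite ler_norml; apply/andP; split; nra.
by rewrite lerDl; apply: sumr_ge0 => j _; rewrite -expr2 sqr_ge0.
Qed.

Lemma dotv_telescope (c : V) (k : nat) (xs : nat -> V) :
  \sum_(i < k) dotv c (xs i.+1 - xs i) = dotv c (xs k - xs 0%N).
Proof.
rewrite dotvBr -(telescope_sumr (fun i => dotv c (xs i)) (leq0n k)) big_mkord.
by apply: eq_bigr => i _; rewrite dotvBr.
Qed.

End Euclid.

Section Topology.
Variables (R : realType) (n : nat).
Local Notation V := 'rV[R]_n.

Lemma nbhs_jball (p : V) (d : R) : 0 < d -> nbhs p [set y : V | jfun (y - p) < d].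
Proof.
move=> d0; apply/nbhs_ballP.
have n1 : 0 < n%:R + 1 :> R by rewrite ltr_wpDl.
set e := Num.min 1 (d / (n%:R + 1)).
have e0 : 0 < e by rewrite lt_min ltr01 divr_gt0.
have e1 : e <= 1 by rewrite ge_min lexx.
have ed : e * (n%:R + 1) <= d by rewrite -ler_pdivlMr // ge_min lexx orbT.
exists e => // y [_ hy] /=.
have : \sum_(i < n) (y - p) ord0 i * (y - p) ord0 i <= \sum_(i < n) e * e.
  apply: ler_sum => i _; rewrite !mxE.
  have hi : `|y ord0 i - p ord0 i| < e by have := hy ord0 i; rewrite /ball /= distrC.
  by apply: le_trans (ler_norm _) _; rewrite normrM ler_pM // ltW.
rewrite sumr_const card_ord -mulr_natl => hsum.
have : n%:R * (e * e) <= n%:R * e by rewrite ler_wpM2l // ger_pMr.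
rewrite /jfun /dotv ltr_pdivrMr //; nra.
Qed.

Lemma jfun_lower (p z : V) (eta : R) : 0 < eta ->
  exists2 d, 0 < d & forall y : V, jfun (y - p) < d -> jfun (p - z) - eta <= jfun (y - z).
Proof.
move=> eta0; have J0 := jfun_ge0 (p - z).
set s := eta / (2 * (jfun (p - z) + 1)).
have s0 : 0 < s by rewrite divr_gt0 // mulr_gt0 // ltr_wpDl.
exists (s * eta / 2) => [|y hy]; first by rewrite divr_gt0 // mulr_gt0.
have hsJ : s * jfun (p - z) <= eta / 2.
  have -> : eta / 2 = s * (jfun (p - z) + 1) by rewrite /s; field; rewrite gt_eqF //; lra.
  by rewrite ler_pM2l //; lra.
have hj : jfun (y - p) / s <= eta / 2.
  by rewrite ler_pdivrMr // [X in _ <= X]mulrC mulrA ltW.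
have -> : y - z = (p - z) + (y - p) by rewrite [RHS]addrC addrA subrK.
have := dotv_le_jfun (p - z) (p - y) s0; rewrite (jfunBC p y) -[p - y]opprB dotvNr.
rewrite (jfunD (p - z)); have := jfun_ge0 (y - p); lra.
Qed.

Lemma jfun_bounded_cluster (ys : nat -> V) (z : V) (B : R) :
  (forall k, jfun (ys k - z) <= B) ->
  exists p, forall d, 0 < d -> forall N, exists2 k, (N <= k)%N & jfun (ys k - p) < d.
Proof.
move=> hB.
pose A i := `[z ord0 i - (1 + 2 * B), z ord0 i + (1 + 2 * B)]%classic.
have cbox : compact [set v : V | forall i, A i (v ord0 i)].
  by apply: rV_compact => i; exact: segment_compact.
have Fbox : \forall k \near \oo, [set v : V | forall i, A i (v ord0 i)] (ys k).
  apply: filterE => k i; rewrite /A /= in_itv /= -ler_distlC distrC.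
  apply: (@le_trans _ _ (1 + 2 * jfun (ys k - z))); last by rewrite lerD2l ler_pM2l.
  by have := coord_le_jfun (ys k - z) i; rewrite !mxE.
have [p [_ clp]] := cbox (ys @ \oo) _ Fbox.
exists p => d d0 N.
have FN : (ys @ \oo) (ys @` [set k | (N <= k)%N]).
  by apply: filterS (nbhs_infty_ge N) => k hk; exists k.
by have [_ [[k hk <-] hkd]] := clp _ _ FN (nbhs_jball p d0); exists k.
Qed.

Lemma lsc_addj (f : V -> \bar R) (z : V) (l : R) : 0 < l -> lsc f ->
  lsc (fun y => (f y + (jfun (y - z) / l)%:E)%E).
Proof.
move=> l0 hf x a hax; set b := a - jfun (x - z) / l.
have /lte_EFin_between[a1 ba1 ha1] : (b%:E < f x)%E by rewrite EFinB lteBlDr.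
have [d1 d10 hd1] := hf _ _ ha1.
have ab : 0 < a1 - b by rewrite subr_gt0.
have [d2 d20 hd2] := jfun_lower x z (mulr_gt0 l0 ab).
exists (Num.min d1 d2) => [|y]; first by rewrite lt_min d10 d20.
rewrite lt_min => /andP[/hd1 hy1 /hd2 hy2].
rewrite -lteBlDr // -EFinB; apply: le_lt_trans hy1; rewrite lee_fin.
have lb : l * b = l * a - jfun (x - z) by rewrite /b; field; rewrite gt_eqF.
rewrite lerBlDr -lerBlDl ler_pdivlMr //; nra.
Qed.

Lemma lsc_attains_min (h : V -> \bar R) (z : V) (C beta : R) :
  lsc h -> 0 < beta -> (exists y, h y != +oo%E) ->
  (forall y, ((C + beta * jfun (y - z))%:E <= h y)%E) ->
  exists p, forall y, (h p <= h y)%E.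
Proof.
move=> hlsc beta0 [y0 hy0] hC.
have [m Em] : exists m : R, ereal_inf (range h) = m%:E.
  have : (C%:E <= ereal_inf (range h))%E.
    apply/ereal_infP => _ [y _ <-]; apply: le_trans (hC y).
    by rewrite lee_fin lerDl mulr_ge0 ?jfun_ge0 ?ltW.
  have : (ereal_inf (range h) < +oo)%E.
    by apply: le_lt_trans (ereal_inf_lbound _) _; [exists y0 | rewrite ltey].
  by case: ereal_inf => [m _ _| |] //; exists m.
have /choice[ys hys] : forall k : nat, exists y, (h y < (m + k.+1%:R^-1)%:E)%E.
  move=> k; have /ereal_inf_lt[_ [y _ <-]] : (ereal_inf (range h) < (m + k.+1%:R^-1)%:E)%E.
    by rewrite Em lte_fin ltrDl invr_gt0.
  by exists y.
have jB : forall k, jfun (ys k - z) <= (m + 1 - C) / beta.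
  move=> k; rewrite ler_pdivlMr // mulrC.
  have := le_lt_trans (hC (ys k)) (hys k); rewrite lte_fin.
  have : k.+1%:R^-1 <= 1 :> R by rewrite invf_le1 ?ler1n ?ltr0n.
  move: (k.+1%:R^-1) => q; lra.
have [p clp] := jfun_bounded_cluster jB.
exists p => y; have hy : range h (h y) by exists y.
apply: le_trans _ (ereal_inf_lbound hy); rewrite Em; apply/lee_addgt0Pr => e e0.
rewrite leNgt; apply/negP => /hlsc[d d0 hd].
have [N hN] := exists_natSinv_lt e0.
have [k hNk /hd hk] := clp d d0 N.
have hkN : k.+1%:R^-1 <= N.+1%:R^-1 :> R by rewrite lef_pV2 ?posrE ?ler_nat.
have := lt_trans hk (hys k); rewrite lte_fin.
move: hN hkN; move: (k.+1%:R^-1) (N.+1%:R^-1) => q q'; lra.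
Qed.

Lemma lsc_quad_minorant (h : V -> \bar R) (x : V) (C a : R) :
  lsc h -> (forall y, (C%:E <= h y)%E) -> (a%:E < h x)%E ->
  exists2 t, 0 < t & forall y, (a%:E <= h y + (jfun (y - x) / t)%:E)%E.
Proof.
move=> hlsc hC /hlsc[d d0 hd]; set K := `|a - C| + 1.
have K0 : 0 < K by rewrite ltr_wpDl.
exists (d / K) => [|y]; first by rewrite divr_gt0.
have [/hd hy|dy] := ltP (jfun (y - x)) d.
  by apply: le_trans (ltW hy) _; rewrite leeDl // lee_fin divr_ge0 ?jfun_ge0 ?ltW ?divr_gt0.
apply: le_trans (leeD2r _ (hC y)); rewrite -EFinD lee_fin.
have : K <= jfun (y - x) / (d / K).
  by rewrite invf_div mulrA ler_pdivlMr // mulrC ler_pM2r.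
by have := ler_norm (a - C); rewrite /K; lra.
Qed.

End Topology.

Section ProxHull.
Variables (R : realType) (n : nat) (lam : R) (f : 'rV[R]_n -> \bar R).
Local Notation V := 'rV[R]_n.

Lemma prox_hullE x : prox_hull lam f x =
  ereal_sup [set (moreau lam f z - (jfun (z - x) / lam)%:E)%E | z in [set: V]].
Proof.
rewrite /prox_hull /moreau -ereal_supN; congr ereal_sup.
apply/seteqP; split => [_ [_ [z _ <-] <-]|_ [z _ <-]].
  by exists z => //; rewrite oppeD ?fin_num_adde_defl // oppeK.
exists (- moreau lam f z + (jfun (z - x) / lam)%:E)%E; first by exists z.
by rewrite oppeD ?fin_num_adde_defl // oppeK.
Qed.

Lemma moreau_sub_le_prox_hull x z :
  (moreau lam f z - (jfun (z - x) / lam)%:E <= prox_hull lam f x)%E.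
Proof. by rewrite prox_hullE; apply: ereal_sup_ubound; exists z. Qed.

Lemma prox_hull_le x : (prox_hull lam f x <= f x)%E.
Proof.
rewrite prox_hullE; apply/ereal_supP => _ [z _ <-].
by rewrite leeBlDr // jfunBC; apply: ereal_inf_lbound; exists x.
Qed.

Lemma moreau_prox_hull : moreau lam (prox_hull lam f) = moreau lam f.
Proof.
apply/funext => w; apply/eqP; rewrite eq_le; apply/andP; split.
  apply/ereal_infP => _ [y _ <-]; apply: le_trans (leeD2r _ (prox_hull_le y)).
  by apply: ereal_inf_lbound; exists y.
apply/ereal_infP => _ [y _ <-].
by rewrite -leeBlDr // jfunBC moreau_sub_le_prox_hull.
Qed.

End ProxHull.

Definition fj (R : realType) (n : nat) (lam : R) (f : 'rV[R]_n -> \bar R) (x : 'rV[R]_n) :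
  \bar R := (f x + (jfun x / lam)%:E)%E.

Definition subgrad (R : realType) (n : nat) (g : 'rV[R]_n -> \bar R) (x u : 'rV[R]_n) :=
  g x \is a fin_num /\ forall y, ((fine (g x) + dotv u (y - x))%:E <= g y)%E.

Section Subgradient.
Variables (R : realType) (n : nat) (g : 'rV[R]_n -> \bar R).
Local Notation V := 'rV[R]_n.

Lemma subgrad_ler x u y : subgrad g x u -> g y \is a fin_num ->
  fine (g x) + dotv u (y - x) <= fine (g y).
Proof. by move=> [_ h] gy; rewrite -lee_fin fineK //; exact: h. Qed.

Section Chain.
Variables (k : nat) (xs us : nat -> V).
Hypothesis xs_subgrad : forall i, (i <= k)%N -> subgrad g (xs i) (us i).

Let telescope_g :
  fine (g (xs k)) - fine (g (xs 0%N)) = \sum_(i < k) (fine (g (xs i.+1)) - fine (g (xs i))).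
Proof. by rewrite -(telescope_sumr (fun i => fine (g (xs i))) (leq0n k)) big_mkord. Qed.

Lemma subgrad_chain_ge :
  fine (g (xs 0%N)) + \sum_(i < k) dotv (us i) (xs i.+1 - xs i) <= fine (g (xs k)).
Proof.
rewrite -lerBrDl telescope_g; apply: ler_sum => i _; rewrite lerBrDl.
by apply: subgrad_ler; [exact: xs_subgrad (ltnW _) | case: (xs_subgrad (ltn_ord i))].
Qed.

Lemma subgrad_chain_le :
  fine (g (xs k)) - fine (g (xs 0%N)) <= \sum_(i < k) dotv (us i.+1) (xs i.+1 - xs i).
Proof.
rewrite telescope_g; apply: ler_sum => i _.
have := subgrad_ler (xs_subgrad (ltn_ord i)) (xs_subgrad (ltnW (ltn_ord i))).1.
by rewrite -[xs i - _]opprB dotvNr; lra.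
Qed.

End Chain.
End Subgradient.

Section ProxSubdiff.
Variables (R : realType) (n : nat) (f : 'rV[R]_n -> \bar R) (lam : R).
Local Notation V := 'rV[R]_n.
Hypothesis fNy : forall x, f x != -oo%E.
Hypothesis lam0 : 0 < lam.

Lemma fj_fin_num x : (fj lam f x \is a fin_num) = (f x \is a fin_num).
Proof. by rewrite fin_numD andbT. Qed.

Lemma fine_fj x : f x \is a fin_num -> fine (fj lam f x) = fine (f x) + jfun x / lam.
Proof. by rewrite /fj; case: (f x). Qed.

Lemma fjNy x : fj lam f x != -oo%E.
Proof. by rewrite adde_eq_ninfty negb_or fNy. Qed.

Lemma prox_subdiffE x v :
  prox_subdiff lam f x v <-> subgrad (fj lam f) x (v + lam^-1 *: x).
Proof.
have key y : jfun x / lam + dotv (v + lam^-1 *: x) (y - x) =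
    dotv v (y - x) - jfun (y - x) / lam + jfun y / lam.
  by rewrite jfunB !dotvE (dotvC x y) dotvv; field; rewrite gt_eqF.
split => [[/set_mem xdom hx]|[fjx hx]].
  have fx : f x \is a fin_num by rewrite fin_numE fNy -ltey.
  split => [|y]; first by rewrite fj_fin_num.
  rewrite fine_fj // -addrA key addrA /fj; apply: lee_EFin_addr => [|r fy]; first exact: fNy.
  by move: (hx y); rewrite fy -(fineK fx) -EFinD lee_fin /=; lra.
have fx : f x \is a fin_num by rewrite -fj_fin_num.
split => [|y]; first by rewrite inE /domf /= ltey; case/andP: (fx).
rewrite -(fineK fx) -EFinD; move: (hx y); rewrite fine_fj // -addrA key addrA /fj.
by case: (f y) (fNy y) => [r| |] //= _; rewrite ?leey // !lee_fin lerD2r.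
Qed.

Lemma prox_point_subgrad p z : f p \is a fin_num ->
  (forall y, (f p + (jfun (p - z) / lam)%:E <= f y + (jfun (y - z) / lam)%:E)%E) ->
  subgrad (fj lam f) p (lam^-1 *: z).
Proof.
move=> fp hp; split => [|y]; first by rewrite fj_fin_num.
rewrite fine_fj // /fj; apply: lee_EFin_addr => [|r fy]; first exact: fNy.
move: (hp y); rewrite fy -(fineK fp) -!EFinD lee_fin /=.
have : jfun (p - z) / lam - jfun (y - z) / lam =
    jfun p / lam - jfun y / lam + dotv (lam^-1 *: z) (y - p).
  by rewrite !jfunB !dotvE (dotvC p z) (dotvC y z); field; rewrite gt_eqF.
lra.
Qed.

Lemma minorant_le_prox_hull (A : R) (u q x : V) :
  (forall y, ((A + dotv u (y - q))%:E <= fj lam f y)%E) ->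
  ((A + dotv u (x - q) - jfun x / lam)%:E <= prox_hull lam f x)%E.
Proof.
move=> hA; apply: le_trans (moreau_sub_le_prox_hull lam f x (lam *: u)).
rewrite leeBrDr // -EFinD; apply/ereal_infP => _ [y _ <-].
apply: lee_EFin_addr => [|r fy]; first exact: fNy.
move: (hA y); rewrite /fj fy -EFinD lee_fin.
have -> : A + dotv u (x - q) - jfun x / lam + jfun (lam *: u - x) / lam =
    A + dotv u (y - q) - jfun y / lam + jfun (y - lam *: u) / lam.
  by rewrite !jfunB jfunZ !dotvE (dotvC y u); field; rewrite gt_eqF.
lra.
Qed.

End ProxSubdiff.

Section ProxThreshold.
Variables (R : realType) (n : nat) (f : 'rV[R]_n -> \bar R).
Local Notation V := 'rV[R]_n.
Hypothesis fproper : proper_fun f.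
Hypothesis flsc : lsc f.

Let fNy : forall x, f x != -oo%E := fproper.1.

Lemma lt_prox_threshold_bounded (l : R) : (l%:E < prox_threshold f)%E ->
  exists2 mu, l < mu & exists (w : V) (c : R), forall y, (c%:E <= f y + (jfun (y - w) / mu)%:E)%E.
Proof.
move=> /ereal_sup_gt[_ [mu [mu0 [w hw]] <-]]; rewrite lte_fin => lmu.
exists mu => //; exists w.
have [c hc] : exists c : R, (c%:E <= moreau mu f w)%E.
  by case: (moreau mu f w) hw => [c _| _|] //; [exists c | exists 0; rewrite leey].
by exists c => y; apply: le_trans hc (ereal_inf_lbound _); exists y.
Qed.

Lemma prox_threshold_quad_minorant (l : R) (z : V) : 0 < l -> (l%:E < prox_threshold f)%E ->
  exists2 beta, 0 < beta & exists C : R,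
    forall y, ((C + beta * jfun (y - z))%:E <= f y + (jfun (y - z) / l)%:E)%E.
Proof.
move=> l0 /lt_prox_threshold_bounded[mu lmu [w [c hc]]].
have mu0 : 0 < mu := lt_trans l0 lmu.
set beta := (l^-1 - mu^-1) / 2.
exists beta; first by rewrite divr_gt0 // subr_gt0 ltf_pV2 ?posrE.
(* [s] makes [(1 + s) / mu] the midpoint [l^-1 - beta] of [mu^-1] and [l^-1]. *)
set s := (mu - l) / (2 * l).
have s0 : 0 < s by rewrite divr_gt0 ?mulr_gt0 // subr_gt0.
have smu : (1 + s) / mu = l^-1 - beta by rewrite /s /beta; field; rewrite !gt_eqF.
exists (c - (1 + s^-1) * jfun (z - w) / mu) => y.
apply: lee_EFin_addr => [|r fy]; first exact: fNy.
move: (hc y); rewrite fy -EFinD lee_fin.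
have := jfunD_le (y - z) (z - w) s0; rewrite addrA subrK.
have mi : 0 <= mu^-1 by rewrite invr_ge0 ltW.
move=> /(ler_wpM2r mi); rewrite mulrDl [(1 + s) * _ * _]mulrAC smu.
lra.
Qed.

Lemma prox_point_exists (l : R) (z : V) : 0 < l -> (l%:E < prox_threshold f)%E ->
  exists p, f p \is a fin_num /\
    forall y, (f p + (jfun (p - z) / l)%:E <= f y + (jfun (y - z) / l)%:E)%E.
Proof.
move=> l0 hl; have [beta beta0 [C hC]] := prox_threshold_quad_minorant z l0 hl.
have [y0 fy0] : exists y0, f y0 != +oo%E by case: fproper.
have hy0 : (f y0 + (jfun (y0 - z) / l)%:E)%E != +oo%E by case: (f y0) fy0.
have [p hp] := lsc_attains_min (lsc_addj (z := z) l0 flsc) beta0 (ex_intro _ y0 hy0) hC.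
exists p; split => //; rewrite fin_numE fNy /=.
by move: (hp y0); case: (f p) => //; rewrite addye // leye_eq (negbTE hy0).
Qed.

End ProxThreshold.

Lemma convex_prox_subgrad (R : realType) (n : nat) (G : 'rV[R]_n -> \bar R) (x p : 'rV[R]_n)
    (t : R) :
  convex_fun G -> (forall y, G y != -oo%E) -> 0 < t -> G p \is a fin_num ->
  (forall y, (G p + (jfun (p - x) / t)%:E <= G y + (jfun (y - x) / t)%:E)%E) ->
  subgrad G p (t^-1 *: (x - p)).
Proof.
move=> cvx GNy t0 Gp hp; split => // y.
case Gy: (G y) (GNy y) => [r| |] // _; last by rewrite leey.
rewrite lee_fin dotvZl -opprB dotvNl mulrN.
set gp := fine (G p); set D := dotv (p - x) (y - p).
suff : gp - r - t^-1 * D <= 0 by lra.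
apply: (@le0_of_le_scaled _ _ (jfun (y - p) / t)); first by rewrite divr_ge0 ?jfun_ge0 ?ltW.
move=> s s01; have /andP[s0 s1] := s01.
set ys := (1 - s) *: p + s *: y.
have cvx_ys := cvx p y s s01; rewrite Gy -(fineK Gp) -!EFinM -EFinD in cvx_ys.
have Gys : G ys \is a fin_num.
  by rewrite fin_numE GNy; move: cvx_ys; case: (G ys).
have := hp ys; rewrite -(fineK Gp) -(fineK Gys) -!EFinD lee_fin /= -/gp.
rewrite jfun_segment -/D => hm; rewrite -(fineK Gys) lee_fin -/gp in cvx_ys.
move: (fine (G ys)) cvx_ys hm => gys hc hm.
have : s * (gp - r - t^-1 * D - s * (jfun (y - p) / t)) <= 0.
  suff -> : s * (gp - r - t^-1 * D - s * (jfun (y - p) / t)) =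
      (gp + jfun (p - x) / t
        - (gys + (jfun (p - x) + s * D + s ^+ 2 * jfun (y - p)) / t))
      + (gys - ((1 - s) * gp + s * r)) by lra.
  by field; rewrite gt_eqF.
by rewrite pmulr_rle0 // subr_le0.
Qed.

Section ProxHullTheory.
Variables (R : realType) (n : nat) (f : 'rV[R]_n -> \bar R) (lam : R).
Local Notation V := 'rV[R]_n.
Hypothesis fproper : proper_fun f.
Hypothesis flsc : lsc f.
Hypothesis lam0 : 0 < lam.
Hypothesis lam_threshold : (lam%:E < prox_threshold f)%E.

Let fNy : forall x, f x != -oo%E := fproper.1.

Lemma convex_minorant_at x (a : R) : convex_fun (fj lam f) -> (a%:E < f x)%E ->
  exists p u, subgrad (fj lam f) p u /\ a <= fine (fj lam f p) + dotv u (x - p) - jfun x / lam.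
Proof.
move=> cvx hax.
have fjlsc : lsc (fj lam f).
  have -> : fj lam f = fun y => (f y + (jfun (y - 0) / lam)%:E)%E.
    by apply/funext => y; rewrite subr0.
  exact: lsc_addj.
have [C fjC] : exists C : R, forall y, (C%:E <= fj lam f y)%E.
  have [beta beta0 [C hC]] := prox_threshold_quad_minorant fproper 0 lam0 lam_threshold.
  exists C => y; have := hC y; rewrite !subr0 => /(le_trans _); apply.
  by rewrite lee_fin lerDl mulr_ge0 ?jfun_ge0 ?ltW.
have hx : ((a + jfun x / lam)%:E < fj lam f x)%E by rewrite /fj EFinD lteD2rE.
have [t t0 hquad] := lsc_quad_minorant fjlsc fjC hx.
have [y0 fy0] : exists y0, f y0 != +oo%E by case: fproper.
have hy0 : (fj lam f y0 + (jfun (y0 - x) / t)%:E)%E != +oo%E by rewrite /fj; case: (f y0) fy0.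
have hC y : ((C + t^-1 * jfun (y - x))%:E <= fj lam f y + (jfun (y - x) / t)%:E)%E.
  by rewrite EFinD mulrC leeD2r.
have t'0 : 0 < t^-1 by rewrite invr_gt0.
have [p /= hp] := lsc_attains_min (lsc_addj (z := x) t0 fjlsc) t'0 (ex_intro _ y0 hy0) hC.
have fjp : fj lam f p \is a fin_num.
  rewrite fin_numE fjNy //=.
  by move: (hp y0); case: (fj lam f p) => //; rewrite addye // leye_eq (negbTE hy0).
exists p, (t^-1 *: (x - p)); split; first exact: convex_prox_subgrad cvx (fjNy lam fNy) t0 fjp hp.
have := hquad p; rewrite -(fineK fjp) -EFinD lee_fin (jfunBC p x) /=.
rewrite dotvZl dotvv; have : 0 <= jfun (x - p) / t by rewrite divr_ge0 ?jfun_ge0 ?ltW.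
lra.
Qed.

Lemma prox_hull_convex : convex_fun (fj lam f) -> prox_hull lam f = f.
Proof.
move=> cvx; apply/funext => x; apply/eqP; rewrite eq_le prox_hull_le /=.
apply: lee_EFin_approx => a /(convex_minorant_at cvx)[p [u [[_ hu] ha]]].
by apply: le_trans (minorant_le_prox_hull fNy lam0 x hu); rewrite lee_fin.
Qed.

Section Fhat.
Variables x0 v0 : V.
Hypothesis x0v0 : prox_subdiff lam f x0 v0.

Let fx0 : f x0 \is a fin_num.
Proof. by rewrite -(fj_fin_num _ lam); case: ((prox_subdiffE fNy lam0 x0 v0).1 x0v0). Qed.

Lemma fhatE x : fhat lam f x0 x =
  (ereal_sup (chain_sums lam f x0 x) + (fine (fj lam f x0) - jfun x / lam)%:E)%E.
Proof.
rewrite /fhat fine_fj //; case: (f x0) fx0 => // r _ /=.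
by case: ereal_sup => [s| |] //=; congr EFin; ring.
Qed.

Lemma chain_le_fhat k (xs us : nat -> V) x : xs 0%N = x0 ->
  (forall i, (i <= k)%N -> subgrad (fj lam f) (xs i) (us i)) ->
  ((fine (fj lam f x0) + \sum_(i < k) dotv (us i) (xs i.+1 - xs i) + dotv (us k) (x - xs k)
    - jfun x / lam)%:E <= fhat lam f x0 x)%E.
Proof.
move=> xs0 hsub; rewrite fhatE.
have -> : forall a b c d : R, (a + b + c - d)%:E = ((b + c)%:E + (a - d)%:E)%E.
  by move=> a b c d; rewrite -EFinD; congr EFin; ring.
apply: leeD2r; apply: ereal_sup_ubound.
exists k, xs, (fun i => us i - lam^-1 *: xs i); split => // [i /hsub|].
  by rewrite -{1}(subrK (lam^-1 *: xs i) (us i)) => /(prox_subdiffE fNy lam0).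
by congr EFin; congr (_ + _); [apply: eq_bigr => i _|]; rewrite subrK.
Qed.

Lemma fhat_le_prox_hull x : (fhat lam f x0 x <= prox_hull lam f x)%E.
Proof.
rewrite fhatE -leeBrDr //; apply/ereal_supP => _ [k [xs [vs [xs0 hvs ->]]]].
rewrite leeBrDr // -EFinD.
have hsub i : (i <= k)%N -> subgrad (fj lam f) (xs i) (vs i + lam^-1 *: xs i).
  by move=> /hvs /(prox_subdiffE fNy lam0).
have hA y : ((fine (fj lam f x0) + \sum_(i < k) dotv (vs i + lam^-1 *: xs i) (xs i.+1 - xs i)
    + dotv (vs k + lam^-1 *: xs k) (y - xs k))%:E <= fj lam f y)%E.
  apply: le_trans ((hsub k (leqnn k)).2 y); rewrite lee_fin lerD2r -xs0.
  exact: subgrad_chain_ge hsub.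
by apply: le_trans (minorant_le_prox_hull fNy lam0 x hA); rewrite lee_fin; lra.
Qed.

Lemma segment_chain_le_fhat (P : V -> V) x z (N : nat) :
  (forall w, subgrad (fj lam f) (P w) (lam^-1 *: w)) ->
  ((fine (fj lam f (P z)) + lam^-1 * dotv z (x - P z) - jfun x / lam
    - lam^-1 * dotv (z - (x0 + lam *: v0)) (P z - x0) / N.+1%:R)%:E
   <= fhat lam f x0 x)%E.
Proof.
move=> Psub; set z0 := x0 + lam *: v0.
pose us i := lam^-1 *: (z0 + (i%:R / N.+1%:R) *: (z - z0)).
pose xs i := if i is 0 then x0 else P (lam *: us i).
have lamN0 : lam != 0 by rewrite gt_eqF.
have hsub i : subgrad (fj lam f) (xs i) (us i).
  case: i => [|i]; last by have := Psub (lam *: us i.+1); rewrite scalerK.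
  rewrite /us mul0r scale0r addr0 scalerDr scalerK // addrC.
  exact/(prox_subdiffE fNy lam0).
have usN : us N.+1 = lam^-1 *: z.
  by rewrite /us divff ?pnatr_eq0 // scale1r addrC subrK.
have xsN : xs N.+1 = P z by rewrite /xs usN scalerKV.
(* The slopes [us i] advance by the constant step [c], so the gap between the
   two chain bounds telescopes to [<c, P z - x0>]. *)
set c := lam^-1 *: (N.+1%:R^-1 *: (z - z0)).
have usS i : us i.+1 = us i + c.
  rewrite /us /c -scalerDr -[in RHS]addrA -scalerDl; congr (_ *: (_ + _ *: _)).
  by rewrite -natr1 mulrDl mul1r.
have tele : \sum_(i < N.+1) dotv (us i.+1) (xs i.+1 - xs i) =
    \sum_(i < N.+1) dotv (us i) (xs i.+1 - xs i) + dotv c (P z - x0).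
  under eq_bigr do rewrite usS dotvDl.
  by rewrite big_split /= dotv_telescope xsN.
have := subgrad_chain_le (k := N.+1) (fun i _ => hsub i); rewrite tele xsN => hle.
apply: le_trans (chain_le_fhat (k := N.+1) x (erefl : xs 0%N = x0) (fun i _ => hsub i)).
move: hle; rewrite lee_fin xsN usN /c !dotvZl (_ : xs 0%N = x0) //.
move: (N.+1%:R^-1) => q; lra.
Qed.

Lemma moreau_sub_le_fhat x z :
  (moreau lam f z - (jfun (z - x) / lam)%:E <= fhat lam f x0 x)%E.
Proof.
have /choice[P hP] : forall w : V, exists p, f p \is a fin_num /\
    forall y, (f p + (jfun (p - w) / lam)%:E <= f y + (jfun (y - w) / lam)%:E)%E.
  by move=> w; exact: prox_point_exists.
have Psub w : subgrad (fj lam f) (P w) (lam^-1 *: w).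
  by have [fp pmin] := hP w; exact: prox_point_subgrad.
have fp := (hP z).1.
apply: (@le_trans _ _ ((fine (f (P z)) + jfun (P z - z) / lam - jfun (z - x) / lam)%:E)).
  rewrite EFinB; apply: leeB (lexx _); rewrite EFinD fineK //.
  by apply: ereal_inf_lbound; exists (P z).
apply: (le_EFin_natSinv (C := lam^-1 * dotv (z - (x0 + lam *: v0)) (P z - x0))) => N.
apply: le_trans (segment_chain_le_fhat x z N Psub).
have : jfun (P z - z) / lam - jfun (z - x) / lam =
    jfun (P z) / lam + lam^-1 * dotv z (x - P z) - jfun x / lam.
  by rewrite (jfunBC z x) !jfunB !dotvE (dotvC (P z) z) (dotvC x z); field; rewrite gt_eqF.
rewrite lee_fin fine_fj //; move: (N.+1%:R^-1) => q; lra.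
Qed.

Lemma fhat_eq_prox_hull : fhat lam f x0 = prox_hull lam f.
Proof.
apply/funext => x; apply/eqP; rewrite eq_le fhat_le_prox_hull prox_hullE.
by apply/ereal_supP => _ [z _ <-]; exact: moreau_sub_le_fhat.
Qed.

End Fhat.

End ProxHullTheory.

Unset Implicit Arguments.
Local Close Scope classical_set_scope.

Theorem mainTheorem12 (R : realType) (n : nat) (f : 'rV[R]_n -> \bar R)
    (lam : R) (x0 : 'rV[R]_n) :
  proper_fun f -> lsc f -> prox_bounded f ->
  (0 < prox_threshold f)%E ->
  0 < lam -> (lam%:E < prox_threshold f)%E ->
  x0 \in dom_prox_subdiff lam f ->
  (fhat lam f x0 = prox_hull lam f /\
   moreau lam (fhat lam f x0) = moreau lam f) /\
  (convex_fun (fun x => (f x + (jfun x / lam)%:E)%E) -> fhat lam f x0 = f).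
Proof.
move=> fproper flsc _ _ lam0 lam_threshold /set_mem[v0 x0v0].
have fhat_hull := fhat_eq_prox_hull fproper flsc lam0 lam_threshold x0v0.
split; first by rewrite fhat_hull moreau_prox_hull.
by move=> cvx; rewrite fhat_hull (prox_hull_convex fproper flsc lam0 lam_threshold cvx).
Qed.
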